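(* Let $A$ be a finite abelian group of even order. The trivial subgroup $\{0\}$ of $A$ is a subgroup perfect code of $A$ if and only if $A$ is an elementary abelian $2$-group.
   Context: $A$ is written additively with identity $0$. An element $x$ of $A$ is a square if $x=2y$ for some $y\in A$; a subset is square-free if it contains no squares. For a square-free $T\subseteq A$, the Cayley sum graph $\mathrm{CayS}(A,T)$ is the simple graph with vertex set $A$ in which distinct $x,y$ are adjacent iff $x+y\in T$. A subset $C$ of the vertex set of a graph is a perfect code if every vertex is at distance at most one from exactly one vertex of $C$. A subgroup $H$ of $A$ is a subgroup perfect code of $A$ if $H$ is a perfect code of $\mathrm{CayS}(A,T)$ for some square-free $T\subseteq A$ (the empty set allowed). *)

From mathcomp Require Import all_boot all_order all_algebra all_fingroup all_solvable.
Set Implicit Arguments. Unset Strict Implicit. Unset Printing Implicit Defensive.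
Import GRing.Theory.
Local Open Scope ring_scope.

Definition is_square (A : finZmodType) (x : A) : Prop := exists y : A, x = y *+ 2.

Definition square_free (A : finZmodType) (T : {set A}) : Prop :=
  forall x : A, x \in T -> ~ is_square x.

Definition cays_adj (A : finZmodType) (T : {set A}) : rel A :=
  fun x y => (x != y) && (x + y \in T).

Definition perfect_code (V : finType) (e : rel V) (C : {set V}) : Prop :=
  forall v : V, #|[set c in C | (v == c) || e v c]| = 1%N.

Definition subgroup_perfect_code (A : finZmodType) (H : {set A}) : Prop :=
  exists T : {set A}, square_free T /\ perfect_code (cays_adj T) H.

From mathcomp Require Import all_boot all_order all_algebra all_fingroup all_solvable.
Import GRing.Theory.
Local Open Scope ring_scope.

(* In CayS(A,T) the closed neighbourhood of v meets {0} iff v = 0 or v = v + 0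
   lies in T, so {0} is a perfect code exactly when T contains every nonzero
   element.  Such a T is square-free iff every square 2x vanishes, i.e. iff A
   is an elementary abelian 2-group. *)

Lemma two_abelem_setTP (A : finZmodType) :
  (2.-abelem [set: A])%g <-> (forall x : A, x *+ 2 = 0).
Proof.
have pr2 : prime 2 by [].
split=> [/(abelemP pr2) [_ x2_1] x | x2_0].
  by rewrite -FinRing.zmodXgE x2_1 ?inE // FinRing.zmod1gE.
apply/(abelemP pr2); split; first exact: FinRing.zmod_abelian.
by move=> x _; rewrite FinRing.zmodXgE FinRing.zmod1gE x2_0.
Qed.

Lemma square_free_subset (A : finZmodType) (S T : {set A}) :
  S \subset T -> square_free T -> square_free S.
Proof. by move=> /subsetP sST sqfT x /sST; apply: sqfT. Qed.

Lemma square_free_nonzeroP (A : finZmodType) :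
  square_free [set~ (0 : A)] <-> (forall x : A, x *+ 2 = 0).
Proof.
split=> [sqf x | x2_0 x].
  by apply/eqP; apply/negP => /negP x2_nz; apply: (sqf (x *+ 2)); [rewrite !inE | exists x].
by rewrite !inE => x_nz [y x_eq]; rewrite x_eq x2_0 eqxx in x_nz.
Qed.

Lemma cays_closed_nbhd_zero (A : finZmodType) (T : {set A}) (v : A) :
  [set c in [set 0] | (v == c) || cays_adj T v c]
    = if (v == 0) || (v \in T) then [set 0] else set0.
Proof.
apply/setP => c; rewrite !inE.
case: eqVneq => [-> | c_nz] /=; last by case: ifP; rewrite ?inE ?(negbTE c_nz).
by rewrite /cays_adj addr0; case: eqVneq => //= _; case: (v \in T); rewrite ?set11 ?in_set0.
Qed.

Lemma perfect_code_zeroP (A : finZmodType) (T : {set A}) :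
  perfect_code (cays_adj T) [set 0] <-> [set~ 0] \subset T.
Proof.
split=> [pc | /subsetP sCT v].
  apply/subsetP => v; rewrite !inE => v_nz; have := pc v.
  by rewrite cays_closed_nbhd_zero (negbTE v_nz); case: (v \in T); rewrite ?cards0.
rewrite cays_closed_nbhd_zero; case: eqVneq => [_ | v_nz]; first exact: cards1.
by rewrite sCT ?cards1 // !inE.
Qed.

Lemma subgroup_perfect_code_zeroP (A : finZmodType) :
  subgroup_perfect_code [set (0 : A)] <-> square_free [set~ (0 : A)].
Proof.
split=> [[T [sqf /perfect_code_zeroP sCT]] | sqf].
  exact: square_free_subset sCT sqf.
by exists [set~ 0]; split; last exact/perfect_code_zeroP.
Qed.

Theorem corollary3p7 (A : finZmodType) (Heven : ~~ odd #|A|) :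
  subgroup_perfect_code [set (0 : A)] <-> (2.-abelem [set: A])%g.
Proof.
apply: iff_trans (subgroup_perfect_code_zeroP A) _.
apply: iff_trans (square_free_nonzeroP A) _.
exact: iff_sym (two_abelem_setTP A).
Qed.
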